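(* Let $X$ be a real Hilbert space, $I=\{1,\dots,m\}$, and $(U_i)_{i\in I}$ closed linear subspaces of $X$. Set $U_{m+1}=U_1$, and suppose $U_i+U_{i+1}$ is closed for every $i\in I$. Set $T_i=P_{U_{i+1}}R_{U_i}+\mathrm{Id}-P_{U_i}$, $Z_i=\operatorname{Fix}T_i$, $Z=\bigcap_{i\in I}Z_i$, and $T=T_m\cdots T_1$. Suppose the family $(Z_i)_{i\in I}$ is boundedly linearly regular. Then for every $x_0\in X$, the sequence $(T^nx_0)_{n\in\mathbb N}$ converges linearly to a point of $Z$.
   Context: $P_S$ is the orthogonal projection onto $S$, $R_S=2P_S-\mathrm{Id}$. A finite family $(C_i)_{i\in I}$ of closed convex sets with $C=\bigcap_iC_i\ne\varnothing$ is boundedly linearly regular if for every $\rho>0$ there is $\mu>0$ with $d_C(x)\le\mu\max_{i}d_{C_i}(x)$ for all $\|x\|\le\rho$. Linear convergence to $\bar x$ means $\|x_n-\bar x\|\le cq^n$ for some $c\ge0$, $q\in[0,1[$. *)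

From Stdlib Require Import Reals Lra Lia ClassicalEpsilon.
Open Scope R_scope.

Record HilbertSpace := {
  carrier :> Type;
  hzero : carrier;
  hadd : carrier -> carrier -> carrier;
  hopp : carrier -> carrier;
  hscal : R -> carrier -> carrier;
  inner : carrier -> carrier -> R;
  hadd_assoc : forall x y z, hadd x (hadd y z) = hadd (hadd x y) z;
  hadd_comm : forall x y, hadd x y = hadd y x;
  hadd_zero : forall x, hadd x hzero = x;
  hadd_opp : forall x, hadd x (hopp x) = hzero;
  hscal_assoc : forall a b x, hscal a (hscal b x) = hscal (a * b) x;
  hscal_one : forall x, hscal 1 x = x;
  hscal_distr_vec : forall a x y, hscal a (hadd x y) = hadd (hscal a x) (hscal a y);
  hscal_distr_scal : forall a b x, hscal (a + b) x = hadd (hscal a x) (hscal b x);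
  inner_sym : forall x y, inner x y = inner y x;
  inner_add_l : forall x y z, inner (hadd x y) z = inner x z + inner y z;
  inner_scal_l : forall a x y, inner (hscal a x) y = a * inner x y;
  inner_pos : forall x, 0 <= inner x x;
  inner_def : forall x, inner x x = 0 -> x = hzero;
  hcomplete : forall u : nat -> carrier,
    (forall eps, 0 < eps -> exists N, forall n k, (N <= n)%nat -> (N <= k)%nat ->
        sqrt (inner (hadd (u n) (hopp (u k))) (hadd (u n) (hopp (u k)))) < eps) ->
    exists l, forall eps, 0 < eps -> exists N, forall n, (N <= n)%nat ->
        sqrt (inner (hadd (u n) (hopp l)) (hadd (u n) (hopp l))) < eps
}.

Arguments hzero {_}.
Arguments hadd {_}.
Arguments hopp {_}.
Arguments hscal {_}.
Arguments inner {_}.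

Section Hilb.
Context {X : HilbertSpace}.

Definition hsub (x y : X) : X := hadd x (hopp y).
Definition hnorm (x : X) : R := sqrt (inner x x).

Definition hconv (u : nat -> X) (l : X) : Prop :=
  forall eps, 0 < eps -> exists N, forall n, (N <= n)%nat -> hnorm (hsub (u n) l) < eps.

Definition is_closed (S : X -> Prop) : Prop :=
  forall (u : nat -> X) (l : X), (forall n, S (u n)) -> hconv u l -> S l.

Definition closed_subspace (S : X -> Prop) : Prop :=
  S hzero /\ (forall x y, S x -> S y -> S (hadd x y)) /\
  (forall a x, S x -> S (hscal a x)) /\ is_closed S.

Definition set_sum (U V : X -> Prop) : X -> Prop :=
  fun z => exists u v, U u /\ V v /\ z = hadd u v.

(* orthogonal projection P_S x: the (unique, for S a nonempty closed convex
   set) nearest point of S to x. *)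
Definition proj (S : X -> Prop) (x : X) : X :=
  epsilon (inhabits x)
    (fun p => S p /\ forall y, S y -> hnorm (hsub x p) <= hnorm (hsub x y)).

Definition refl (S : X -> Prop) (x : X) : X :=
  hsub (hscal 2 (proj S x)) x.

Definition is_inf (A : R -> Prop) (d : R) : Prop :=
  (forall r, A r -> d <= r) /\ (forall b, (forall r, A r -> b <= r) -> b <= d).

Definition setdist (S : X -> Prop) (x : X) : R :=
  epsilon (inhabits 0) (is_inf (fun r => exists c, S c /\ r = hnorm (hsub x c))).

Definition inter_fam (m : nat) (C : nat -> X -> Prop) : X -> Prop :=
  fun x => forall i, (1 <= i <= m)%nat -> C i x.

(* max_{1 <= i <= k} d_{C_i}(x)  (distances are >= 0, so starting at 0 is harmless) *)
Fixpoint maxdist (C : nat -> X -> Prop) (x : X) (k : nat) : R :=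
  match k with
  | O => 0
  | S k' => Rmax (maxdist C x k') (setdist (C (S k')) x)
  end.

Definition bdd_lin_regular (m : nat) (C : nat -> X -> Prop) : Prop :=
  (exists c, inter_fam m C c) /\
  forall rho, 0 < rho -> exists mu, 0 < mu /\
    forall x, hnorm x <= rho -> setdist (inter_fam m C) x <= mu * maxdist C x m.

Definition cyc (m i : nat) : nat := if Nat.eqb i (S m) then 1%nat else i.

Definition Top (m : nat) (U : nat -> X -> Prop) (i : nat) (x : X) : X :=
  hsub (hadd (proj (U (cyc m (S i))) (refl (U i) x)) x) (proj (U i) x).

Definition Zset (m : nat) (U : nat -> X -> Prop) (i : nat) : X -> Prop :=
  fun x => Top m U i x = x.

Fixpoint Tcomp (m : nat) (U : nat -> X -> Prop) (k : nat) (x : X) : X :=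
  match k with
  | O => x
  | S k' => Top m U (S k') (Tcomp m U k' x)
  end.

Definition lin_conv (u : nat -> X) (xbar : X) : Prop :=
  exists c q, 0 <= c /\ 0 <= q < 1 /\ forall n, hnorm (hsub (u n) xbar) <= c * q ^ n.

End Hilb.

(* Every T_i is the Douglas-Rachford operator of the pair (U_i, U_(i+1)): it is
   linear and firmly nonexpansive, so T is Fejer monotone with respect to Z and
   |x - z|^2 = |T x - z|^2 + (sum of the squared step lengths) for z in Z.
   Closedness of U_i + U_(i+1) gives, through Baire's theorem, decompositions
   w = a + b with |a|, |b| <= K |w|; from these one builds, near any y, a fixed
   point of T_i at distance O(|y - T_i y|).  Bounded linear regularity of the
   Z_i then bounds d_Z(x)^2 by a multiple of the squared step lengths of T at x,
   so d_Z(T x)^2 <= r d_Z(x)^2 with r < 1 on the bounded set containing the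
   orbit.  A Fejer monotone sequence whose distance to the closed set Z decays
   geometrically converges linearly to a point of Z. *)

From Stdlib Require Import Reals Lra Lia ClassicalEpsilon Classical.
Open Scope R_scope.

Arguments hadd_assoc {_}. Arguments hadd_comm {_}. Arguments hadd_zero {_}.
Arguments hadd_opp {_}. Arguments inner_sym {_}. Arguments inner_add_l {_}.
Arguments inner_scal_l {_}. Arguments inner_pos {_}. Arguments inner_def {_}.
Arguments hcomplete {_}.

Section InnerAlgebra.
Context {X : HilbertSpace}.
Implicit Types x y z u v w : X.

Lemma inner_add_r x y z : inner x (hadd y z) = inner x y + inner x z.
Proof. rewrite inner_sym, inner_add_l, (inner_sym y), (inner_sym z). ring. Qed.

Lemma inner_scal_r a x y : inner x (hscal a y) = a * inner x y.
Proof. rewrite inner_sym, inner_scal_l, inner_sym. ring. Qed.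

Lemma inner_zero_l y : inner hzero y = 0.
Proof. pose proof (inner_add_l hzero hzero y) as H. rewrite hadd_zero in H. lra. Qed.

Lemma inner_zero_r y : inner y hzero = 0.
Proof. rewrite inner_sym. apply inner_zero_l. Qed.

Lemma inner_opp_l x y : inner (hopp x) y = - inner x y.
Proof.
  pose proof (inner_add_l x (hopp x) y) as H.
  rewrite hadd_opp, inner_zero_l in H. lra.
Qed.

Lemma inner_opp_r x y : inner y (hopp x) = - inner y x.
Proof. rewrite inner_sym, inner_opp_l, inner_sym. ring. Qed.

Lemma inner_sub_l x y z : inner (hsub x y) z = inner x z - inner y z.
Proof. unfold hsub. rewrite inner_add_l, inner_opp_l. ring. Qed.

Lemma inner_sub_r x y z : inner z (hsub x y) = inner z x - inner z y.
Proof. unfold hsub. rewrite inner_add_r, inner_opp_r. ring. Qed.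

Lemma hsub_eq0 u v : hsub u v = hzero -> u = v.
Proof.
  intro H.
  assert (E : hadd (hsub u v) v = u).
  { unfold hsub. rewrite <- hadd_assoc, (hadd_comm (hopp v) v), hadd_opp, hadd_zero.
    reflexivity. }
  rewrite H, hadd_comm, hadd_zero in E. symmetry. exact E.
Qed.

Lemma inner_ext u v : (forall w, inner u w = inner v w) -> u = v.
Proof. intro H. apply hsub_eq0, inner_def. rewrite inner_sub_l, H. ring. Qed.
End InnerAlgebra.

(* Vector identities are proved by testing them against an arbitrary vector
   and expanding the inner product. *)
Ltac inner_expand :=
  repeat rewrite ?inner_add_l, ?inner_sub_l, ?inner_opp_l, ?inner_scal_l, ?inner_zero_l,
    ?inner_add_r, ?inner_sub_r, ?inner_opp_r, ?inner_scal_r, ?inner_zero_r.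
Ltac vector_eq :=
  apply inner_ext; let w := fresh "w" in intro w; inner_expand; first [ring | field; lra].

Section Norms.
Context {X : HilbertSpace}.
Implicit Types x y z u v w : X.

Lemma hnorm_ge0 x : 0 <= hnorm x.
Proof. apply sqrt_pos. Qed.

Lemma hnorm_sq x : hnorm x * hnorm x = inner x x.
Proof. apply sqrt_sqrt, inner_pos. Qed.

Lemma hnorm_le_sq x y : hnorm x <= hnorm y <-> inner x x <= inner y y.
Proof.
  split; intro H.
  - apply sqrt_le_0; auto using inner_pos.
  - apply sqrt_le_1_alt, H.
Qed.

Lemma hnorm_zero : hnorm (@hzero X) = 0.
Proof. unfold hnorm. rewrite inner_zero_l. apply sqrt_0. Qed.

Lemma hnorm_eq0 x : hnorm x = 0 -> x = hzero.
Proof. intro H. apply inner_def, sqrt_eq_0; auto using inner_pos. Qed.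

Lemma hnorm_le0 x : hnorm x <= 0 -> x = hzero.
Proof. intro H. apply hnorm_eq0. pose proof (hnorm_ge0 x). lra. Qed.

Lemma hsub_self x : hsub x x = hzero.
Proof. vector_eq. Qed.

Lemma Rle_of_sq_le a b : 0 <= b -> a * a <= b * b -> a <= b.
Proof. intros. nra. Qed.

Lemma cauchy_schwarz_sq x y : inner x y * inner x y <= inner x x * inner y y.
Proof.
  destruct (Req_dec (inner y y) 0) as [H0|H0].
  - apply inner_def in H0. subst. rewrite !inner_zero_r. lra.
  - pose proof (inner_pos y). set (t := inner x y / inner y y).
    assert (Ht : t * inner y y = inner x y) by (unfold t; field; auto).
    pose proof (inner_pos (hsub x (hscal t y))) as P. revert P; inner_expand; intro P.
    rewrite (inner_sym y x) in P. nra.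
Qed.

Lemma cauchy_schwarz x y : inner x y <= hnorm x * hnorm y.
Proof.
  pose proof (cauchy_schwarz_sq x y) as H.
  rewrite <- (hnorm_sq x), <- (hnorm_sq y) in H.
  pose proof (hnorm_ge0 x); pose proof (hnorm_ge0 y).
  apply Rle_of_sq_le; nra.
Qed.

Lemma hnorm_triangle x y : hnorm (hadd x y) <= hnorm x + hnorm y.
Proof.
  apply Rle_of_sq_le. { pose proof (hnorm_ge0 x); pose proof (hnorm_ge0 y); lra. }
  rewrite hnorm_sq. inner_expand. rewrite (inner_sym y x).
  pose proof (cauchy_schwarz x y). pose proof (hnorm_sq x). pose proof (hnorm_sq y). nra.
Qed.

Lemma hnorm_scal a x : hnorm (hscal a x) = Rabs a * hnorm x.
Proof.
  unfold hnorm. inner_expand. rewrite <- Rmult_assoc, sqrt_mult_alt by nra.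
  f_equal. rewrite <- sqrt_Rsqr_abs. reflexivity.
Qed.

Lemma hnorm_opp x : hnorm (hopp x) = hnorm x.
Proof. unfold hnorm. inner_expand. f_equal. ring. Qed.

Lemma hnorm_sub_sym x y : hnorm (hsub x y) = hnorm (hsub y x).
Proof. unfold hnorm. f_equal. inner_expand. rewrite (inner_sym x y). ring. Qed.

Lemma hnorm_sub_triangle x y z : hnorm (hsub x z) <= hnorm (hsub x y) + hnorm (hsub y z).
Proof.
  replace (hsub x z) with (hadd (hsub x y) (hsub y z)) by vector_eq.
  apply hnorm_triangle.
Qed.

Lemma hnorm_sub_le x y : hnorm (hsub x y) <= hnorm x + hnorm y.
Proof. unfold hsub. rewrite <- (hnorm_opp y). apply hnorm_triangle. Qed.

Lemma hnorm_sub_zero x : hnorm (hsub x hzero) = hnorm x.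
Proof. f_equal. vector_eq. Qed.

Lemma inner_sum_le x y : inner (hadd x y) (hadd x y) <= 2 * inner x x + 2 * inner y y.
Proof.
  pose proof (inner_pos (hsub x y)) as H. revert H. inner_expand.
  rewrite (inner_sym y x). lra.
Qed.
End Norms.

Lemma pow_lt_eps q eps : 0 <= q < 1 -> 0 < eps ->
  exists N, forall n, (N <= n)%nat -> q ^ n < eps.
Proof.
  intros Hq He. destruct (pow_lt_1_zero q) with (y := eps) as [N HN]; auto.
  { rewrite Rabs_right; lra. }
  exists N. intros n Hn. specialize (HN n Hn).
  rewrite Rabs_right in HN; auto. apply Rle_ge, pow_le; lra.
Qed.

Lemma geometric_lt_eps c q eps : 0 <= q < 1 -> 0 < eps ->
  exists N, forall n, (N <= n)%nat -> c * q ^ n < eps.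
Proof.
  intros Hq He. pose proof (Rabs_pos c).
  destruct (pow_lt_eps q (eps / (Rabs c + 1)) Hq) as [N HN].
  { apply Rdiv_lt_0_compat; lra. }
  exists N. intros n Hn. specialize (HN n Hn).
  pose proof (pow_le q n ltac:(lra)). pose proof (RRle_abs c).
  apply Rmult_lt_compat_l with (r := Rabs c + 1) in HN; [|lra].
  replace ((Rabs c + 1) * (eps / (Rabs c + 1))) with eps in HN by (field; lra).
  nra.
Qed.

Lemma Rle_of_geometric a b c q : 0 <= q < 1 -> (forall n, a <= b + c * q ^ n) -> a <= b.
Proof.
  intros Hq H. apply Rle_plus_epsilon. intros eps He.
  destruct (geometric_lt_eps c q eps Hq He) as [N HN].
  specialize (HN N (le_n _)). specialize (H N). lra.
Qed.

Lemma pow_le_pow_dec q n k : 0 <= q <= 1 -> (n <= k)%nat -> q ^ k <= q ^ n.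
Proof.
  intros Hq Hnk. replace k with (n + (k - n))%nat by lia.
  rewrite pow_add. pose proof (pow_le q n ltac:(lra)).
  assert (q ^ (k - n) <= 1) by (rewrite <- (pow1 (k - n)); apply pow_incr; lra).
  nra.
Qed.

Section Limits.
Context {X : HilbertSpace}.
Implicit Types x y z u v w : X.

Lemma hconv_dist_le (u : nat -> X) l y M N :
  hconv u l -> (forall n, (N <= n)%nat -> hnorm (hsub (u n) y) <= M) ->
  hnorm (hsub l y) <= M.
Proof.
  intros Hc Hb. apply Rle_plus_epsilon. intros eps He.
  destruct (Hc eps He) as [N1 HN1].
  specialize (HN1 (max N N1) ltac:(lia)). specialize (Hb (max N N1) ltac:(lia)).
  pose proof (hnorm_sub_triangle l (u (max N N1)) y).
  rewrite hnorm_sub_sym in HN1. lra.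
Qed.

Lemma hconv_of_geometric (u : nat -> X) l c q : 0 <= q < 1 ->
  (forall n, hnorm (hsub (u n) l) <= c * q ^ n) -> hconv u l.
Proof.
  intros Hq H eps He. destruct (geometric_lt_eps c q eps Hq He) as [N HN].
  exists N. intros n Hn. specialize (HN n Hn). specialize (H n). lra.
Qed.

Lemma geometric_cauchy_conv (u : nat -> X) c q : 0 <= q < 1 ->
  (forall n k, (n <= k)%nat -> hnorm (hsub (u k) (u n)) <= c * q ^ n) ->
  exists l, hconv u l /\ forall n, hnorm (hsub (u n) l) <= c * q ^ n.
Proof.
  intros Hq H.
  destruct (hcomplete u) as [l Hl].
  { intros eps He. destruct (geometric_lt_eps c q eps Hq He) as [N HN].
    exists N. intros n k Hn Hk. change (hnorm (hsub (u n) (u k)) < eps).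
    destruct (Nat.le_ge_cases n k).
    - rewrite hnorm_sub_sym. specialize (H n k H0). specialize (HN n Hn). lra.
    - specialize (H k n H0). specialize (HN k Hk). lra. }
  exists l. split; [exact Hl|].
  intro n. rewrite hnorm_sub_sym.
  apply hconv_dist_le with (u := u) (N := n); auto.
Qed.
End Limits.

Lemma is_inf_exists (E : R -> Prop) :
  (exists r, E r) -> (forall r, E r -> 0 <= r) -> exists d, is_inf E d.
Proof.
  intros [r0 Hr0] Hpos.
  destruct (completeness (fun r => E (- r))) as [M [HM1 HM2]].
  - exists 0. intros r Hr. specialize (Hpos _ Hr). lra.
  - exists (- r0). rewrite Ropp_involutive. auto.
  - exists (- M). split.
    + intros r Hr. assert (- r <= M) by (apply HM1; rewrite Ropp_involutive; auto). lra.
    + intros b Hb. assert (M <= - b) by (apply HM2; intros r Hr; specialize (Hb _ Hr); lra).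
      lra.
Qed.

Section Subspaces.
Context {X : HilbertSpace}.
Implicit Types x y z u v w : X.
Implicit Types S : X -> Prop.

Lemma cs_zero S : closed_subspace S -> S hzero.
Proof. intros [H _]. exact H. Qed.

Lemma cs_add S x y : closed_subspace S -> S x -> S y -> S (hadd x y).
Proof. intros [_ [H _]]. auto. Qed.

Lemma cs_scal S a x : closed_subspace S -> S x -> S (hscal a x).
Proof. intros [_ [_ [H _]]]. auto. Qed.

Lemma cs_closed S : closed_subspace S -> is_closed S.
Proof. intros [_ [_ [_ H]]]. auto. Qed.

Lemma cs_sub S x y : closed_subspace S -> S x -> S y -> S (hsub x y).
Proof.
  intros HS Hx Hy. replace (hsub x y) with (hadd x (hscal (-1) y)) by vector_eq.
  apply cs_add, cs_scal; auto.
Qed.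

(* Parallelogram law applied to x - s and x - t, whose midpoint lies in S. *)
Lemma minimizing_pair_close S x d s t : closed_subspace S ->
  (forall y, S y -> d <= inner (hsub x y) (hsub x y)) -> S s -> S t ->
  inner (hsub t s) (hsub t s)
    <= 2 * inner (hsub x s) (hsub x s) + 2 * inner (hsub x t) (hsub x t) - 4 * d.
Proof.
  intros HS Hd Hs Ht.
  set (mid := hscal (/2) (hadd s t)).
  assert (Hm := Hd mid ltac:(apply cs_scal, cs_add; auto)).
  replace (hsub t s) with (hsub (hsub x s) (hsub x t)) by vector_eq.
  replace (hsub x mid) with (hscal (/2) (hadd (hsub x s) (hsub x t))) in Hm
    by (unfold mid; vector_eq).
  revert Hm. generalize (hsub x s) (hsub x t). intros a b. inner_expand.
  rewrite (inner_sym b a). lra.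
Qed.

Lemma sqrt_plus_sq_le d e : 0 <= d -> 0 <= e -> sqrt (d + e * e) <= sqrt d + e.
Proof.
  intros Hd He. apply Rle_of_sq_le. { pose proof (sqrt_pos d). lra. }
  pose proof (sqrt_sqrt d Hd). pose proof (sqrt_pos d).
  rewrite sqrt_sqrt by nra. nra.
Qed.

Lemma proj_exists S x : closed_subspace S ->
  exists p, S p /\ forall y, S y -> hnorm (hsub x p) <= hnorm (hsub x y).
Proof.
  intro HS.
  destruct (is_inf_exists (fun r => exists s, S s /\ r = inner (hsub x s) (hsub x s)))
    as [d [Hd1 Hd2]].
  { exists (inner (hsub x hzero) (hsub x hzero)), hzero. split; auto. apply cs_zero; auto. }
  { intros r [s [_ ->]]. apply inner_pos. }
  assert (Hd0 : 0 <= d) by (apply Hd2; intros r [s' [_ ->]]; apply inner_pos).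
  assert (Hlow : forall y, S y -> d <= inner (hsub x y) (hsub x y)) by (intros; apply Hd1; eauto).
  assert (Hq : forall n, (/4) ^ n = (/2) ^ n * (/2) ^ n)
    by (intro; rewrite <- Rpow_mult_distr; f_equal; field).
  assert (Happ : forall n : nat, exists s, S s /\ inner (hsub x s) (hsub x s) < d + (/4) ^ n).
  { intro n. apply NNPP. intro Hn.
    assert (d + (/4) ^ n <= d).
    { apply Hd2. intros r [s [Hs ->]]. apply Rnot_lt_le. intro. apply Hn. eauto. }
    pose proof (pow_lt (/4) n ltac:(lra)). lra. }
  destruct (choice _ Happ) as [s Hs].
  destruct (geometric_cauchy_conv s 2 (/2)) as [l [Hl1 Hl2]]; [lra| |].
  { intros n k Hnk. destruct (Hs n) as [Sn Hn]. destruct (Hs k) as [Sk Hk].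
    pose proof (minimizing_pair_close S x d (s n) (s k) HS Hlow Sn Sk).
    pose proof (pow_le_pow_dec (/4) n k ltac:(lra) Hnk).
    assert (Hsq : inner (hsub (s k) (s n)) (hsub (s k) (s n)) <= 4 * (/4) ^ n) by lra.
    pose proof (pow_le (/2) n ltac:(lra)).
    apply Rle_of_sq_le; [lra|]. rewrite hnorm_sq. rewrite Hq in Hsq. lra. }
  exists l. split.
  - apply (cs_closed S HS s l); auto. intro n. apply Hs.
  - intros y Hy.
    assert (Hb : forall n, hnorm (hsub x l) <= sqrt d + 3 * (/2) ^ n).
    { intro n. destruct (Hs n) as [_ Hn].
      pose proof (hnorm_sub_triangle x (s n) l). specialize (Hl2 n).
      pose proof (pow_le (/2) n ltac:(lra)).
      assert (hnorm (hsub x (s n)) <= sqrt d + (/2) ^ n).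
      { eapply Rle_trans; [|apply sqrt_plus_sq_le; auto].
        apply sqrt_le_1_alt. rewrite <- Hq. lra. }
      lra. }
    assert (hnorm (hsub x l) <= sqrt d) by (apply (Rle_of_geometric _ _ 3 (/2)); auto; lra).
    assert (sqrt d <= hnorm (hsub x y)) by (apply sqrt_le_1_alt, Hlow, Hy).
    lra.
Qed.

Lemma proj_spec S x : closed_subspace S ->
  S (proj S x) /\ forall y, S y -> hnorm (hsub x (proj S x)) <= hnorm (hsub x y).
Proof. intro HS. exact (epsilon_spec (inhabits x) _ (proj_exists S x HS)). Qed.

Lemma proj_in S x : closed_subspace S -> S (proj S x).
Proof. intro HS. apply proj_spec, HS. Qed.

Lemma proj_orth S x s : closed_subspace S -> S s -> inner (hsub x (proj S x)) s = 0.
Proof.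
  intros HS Hs.
  destruct (proj_spec S x HS) as [Hp Hmin]. set (p := proj S x) in *.
  set (e := hsub x p). set (c := inner e s). set (n := inner s s).
  assert (Hn : 0 <= n) by apply inner_pos.
  set (t := c / (n + 1)).
  assert (Ht : c = t * (n + 1)) by (unfold t; field; lra).
  specialize (Hmin (hadd p (hscal t s)) ltac:(apply cs_add, cs_scal; auto)).
  apply hnorm_le_sq in Hmin. fold e in Hmin.
  replace (hsub x (hadd p (hscal t s))) with (hsub e (hscal t s)) in Hmin
    by (unfold e; vector_eq).
  revert Hmin. inner_expand. rewrite (inner_sym s e). fold c n. intro Hmin.
  assert (t * t * (n + 2) <= 0) by nra.
  assert (t = 0) by nra. fold c. rewrite Ht, H0. ring.
Qed.

Lemma proj_unique S x p : closed_subspace S -> S p ->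
  (forall s, S s -> inner (hsub x p) s = 0) -> proj S x = p.
Proof.
  intros HS Hp Ho. apply hsub_eq0, inner_def.
  set (v := hsub (proj S x) p).
  assert (Sv : S v) by (apply cs_sub; [exact HS | apply proj_in, HS | exact Hp]).
  replace (inner v v) with (inner (hsub (hsub x p) (hsub x (proj S x))) v)
    by (f_equal; unfold v; vector_eq).
  rewrite inner_sub_l, Ho, proj_orth; auto. ring.
Qed.

Lemma proj_sub S x y : closed_subspace S -> proj S (hsub x y) = hsub (proj S x) (proj S y).
Proof.
  intro HS. apply proj_unique; auto. { apply cs_sub; auto; apply proj_in, HS. }
  intros s Hs. pose proof (proj_orth S x s HS Hs). pose proof (proj_orth S y s HS Hs).
  revert H H0. inner_expand. lra.
Qed.
End Subspaces.

(* Equations are excluded because [u = v] would match [?S v] with [?S := eq u]. *)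
Ltac subspace :=
  repeat match goal with
  | |- closed_subspace _ => assumption
  | |- _ = _ => fail 1
  | |- ?S hzero => apply (cs_zero S)
  | |- ?S (hadd _ _) => apply (cs_add S)
  | |- ?S (hsub _ _) => apply (cs_sub S)
  | |- ?S (hscal _ _) => apply (cs_scal S)
  | |- _ => assumption
  | |- ?S _ => apply (proj_in S)
  end.

Section SetDistance.
Context {X : HilbertSpace}.
Implicit Types x y z : X.
Implicit Types S : X -> Prop.

Lemma setdist_spec S x : (exists c, S c) ->
  is_inf (fun r => exists c, S c /\ r = hnorm (hsub x c)) (setdist S x).
Proof.
  intros [c0 Hc0]. unfold setdist. apply epsilon_spec, is_inf_exists.
  - exists (hnorm (hsub x c0)). eauto.
  - intros r [c [_ ->]]. apply hnorm_ge0.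
Qed.

Lemma setdist_le S x c : S c -> setdist S x <= hnorm (hsub x c).
Proof. intro Hc. apply (setdist_spec S x (ex_intro _ c Hc)). eauto. Qed.

Lemma setdist_ge0 S x : (exists c, S c) -> 0 <= setdist S x.
Proof. intro H. apply (setdist_spec S x H). intros r [c [_ ->]]. apply hnorm_ge0. Qed.

Lemma setdist_approx S x eps : (exists c, S c) -> 0 < eps ->
  exists c, S c /\ hnorm (hsub x c) < setdist S x + eps.
Proof.
  intros H He. apply NNPP. intro Hn.
  assert (setdist S x + eps <= setdist S x).
  { apply (setdist_spec S x H). intros r [c [Hc ->]].
    apply Rnot_lt_le. intro. apply Hn. eauto. }
  lra.
Qed.

Lemma setdist_sq_ge S x a : (exists c, S c) ->
  (forall z, S z -> a <= inner (hsub x z) (hsub x z)) -> a <= setdist S x * setdist S x.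
Proof.
  intros Hne H. pose proof (setdist_ge0 S x Hne).
  destruct (Rle_dec a 0) as [Ha|Ha]; [nra|].
  assert (sqrt a <= setdist S x).
  { apply (setdist_spec S x Hne). intros r [z [Hz ->]].
    apply sqrt_le_1_alt. auto. }
  pose proof (sqrt_sqrt a ltac:(lra)). pose proof (sqrt_pos a). nra.
Qed.
End SetDistance.

Section Baire.
Context {X : HilbertSpace}.
Implicit Types x y z w : X.

Lemma nested_balls (c : nat -> X) (r : nat -> R) :
  (forall k, 0 <= r k) -> (forall k, r k <= (/2) ^ k) ->
  (forall k, hnorm (hsub (c (S k)) (c k)) + r (S k) <= r k) ->
  exists l, hconv c l /\ forall k, hnorm (hsub l (c k)) <= r k.
Proof.
  intros Hr0 Hr Hstep.
  assert (Hnest : forall k j, hnorm (hsub (c (k + j)%nat) (c k)) + r (k + j)%nat <= r k).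
  { intros k j. induction j as [|j IH].
    - rewrite Nat.add_0_r, hsub_self, hnorm_zero. lra.
    - rewrite Nat.add_succ_r. pose proof (Hstep (k + j)%nat).
      pose proof (hnorm_sub_triangle (c (S (k + j))) (c (k + j)%nat) (c k)). lra. }
  assert (Hle : forall n k, (n <= k)%nat -> hnorm (hsub (c k) (c n)) <= r n).
  { intros n k Hnk. replace k with (n + (k - n))%nat by lia.
    pose proof (Hnest n (k - n)%nat). pose proof (Hr0 (n + (k - n))%nat). lra. }
  destruct (geometric_cauchy_conv c 1 (/2)) as [l [Hl _]]; [lra| |].
  { intros n k Hnk. rewrite Rmult_1_l. eapply Rle_trans; [apply Hle; exact Hnk | apply Hr]. }
  exists l. split; [exact Hl|].
  intro k. apply hconv_dist_le with (u := c) (N := k); auto.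
Qed.

Lemma ball_shrink_avoiding (W : X -> Prop) (F : X -> Prop) c r :
  (forall w, ~ F w -> exists rho, 0 < rho /\ forall y, hnorm (hsub y w) <= rho -> ~ F y) ->
  ~ (forall w, W w -> hnorm (hsub w c) < r -> F w) ->
  exists c' r', W c' /\ 0 < r' /\ r' <= r / 2 /\ hnorm (hsub c' c) + r' <= r /\
    forall y, hnorm (hsub y c') <= r' -> ~ F y.
Proof.
  intros Hopen Hno.
  assert (exists w, W w /\ hnorm (hsub w c) < r /\ ~ F w) as [w [Hw [Hwc HF]]].
  { apply NNPP. intro H1. apply Hno. intros w Hw Hwc.
    apply NNPP. intro H2. apply H1. eauto. }
  destruct (Hopen w HF) as [rho [Hrho Hball]].
  pose proof (Rmin_l rho ((r - hnorm (hsub w c)) / 2)).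
  pose proof (Rmin_r rho ((r - hnorm (hsub w c)) / 2)).
  set (r' := Rmin rho ((r - hnorm (hsub w c)) / 2)) in *.
  assert (0 < r') by (apply Rmin_glb_lt; lra).
  exists w, r'. pose proof (hnorm_ge0 (hsub w c)).
  repeat split; auto; try lra.
  intros y Hy. apply Hball. lra.
Qed.

Lemma baire_category (W : X -> Prop) (F : nat -> X -> Prop) :
  is_closed W -> (exists w, W w) ->
  (forall n w, ~ F n w -> exists r, 0 < r /\ forall y, hnorm (hsub y w) <= r -> ~ F n y) ->
  (forall w, W w -> exists n, F n w) ->
  exists n w0 r, W w0 /\ 0 < r /\ forall w, W w -> hnorm (hsub w w0) < r -> F n w.
Proof.
  intros HW [w0 Hw0] Hopen Hcover. apply NNPP. intro Hno.
  assert (Hshrink : forall n (p : X * R), exists p' : X * R,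
    W (fst p) -> 0 < snd p ->
    W (fst p') /\ 0 < snd p' /\ snd p' <= snd p / 2 /\
    hnorm (hsub (fst p') (fst p)) + snd p' <= snd p /\
    forall y, hnorm (hsub y (fst p')) <= snd p' -> ~ F n y).
  { intros n [c r]. simpl.
    destruct (classic (W c /\ 0 < r)) as [[Hc Hr]|Hnot]; [|exists (c, r); tauto].
    destruct (ball_shrink_avoiding W (F n) c r (Hopen n)) as [c' [r' Hcr]].
    { intro Hball. apply Hno. exists n, c, r. auto. }
    exists (c', r'). auto. }
  assert (Hnext : forall n, exists f : X * R -> X * R, forall p, W (fst p) -> 0 < snd p ->
    W (fst (f p)) /\ 0 < snd (f p) /\ snd (f p) <= snd p / 2 /\
    hnorm (hsub (fst (f p)) (fst p)) + snd (f p) <= snd p /\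
    forall y, hnorm (hsub y (fst (f p))) <= snd (f p) -> ~ F n y)
    by (intro n; apply (choice _ (Hshrink n))).
  destruct (choice _ Hnext) as [next Hnext'].
  pose (ball := fix ball k := match k with O => (w0, 1) | S k => next k (ball k) end).
  assert (Hball : forall k, W (fst (ball k)) /\ 0 < snd (ball k) /\ snd (ball k) <= (/2) ^ k).
  { induction k as [|k [h1 [h2 h3]]]; simpl; [repeat split; auto; lra|].
    destruct (Hnext' k (ball k) h1 h2) as [g1 [g2 [g3 _]]]. repeat split; auto. lra. }
  destruct (nested_balls (fun k => fst (ball k)) (fun k => snd (ball k))) as [l [Hl Hlk]].
  { intro k. pose proof (Hball k). lra. }
  { apply Hball. }
  { intro k. destruct (Hball k) as [h1 [h2 _]]. apply (Hnext' k (ball k) h1 h2). }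
  destruct (Hcover l) as [n Hn].
  { apply (HW (fun k => fst (ball k)) l); auto. intro k. apply Hball. }
  destruct (Hball n) as [h1 [h2 _]].
  destruct (Hnext' n (ball n) h1 h2) as [_ [_ [_ [_ Havoid]]]].
  apply (Havoid l); auto. apply (Hlk (S n)).
Qed.
End Baire.

Fixpoint psum {X : HilbertSpace} (f : nat -> X) (n : nat) : X :=
  match n with O => hzero | S n => hadd (psum f n) (f n) end.

Section Series.
Context {X : HilbertSpace}.
Variable S : X -> Prop.
Hypothesis HS : closed_subspace S.

Lemma psum_in (f : nat -> X) n : (forall k, S (f k)) -> S (psum f n).
Proof. intro Hf. induction n; simpl; [apply cs_zero | apply cs_add]; auto. Qed.

Lemma geometric_series_conv (f : nat -> X) c : (forall k, S (f k)) ->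
  (forall k, hnorm (f k) <= c * (/2) ^ k) ->
  exists s, S s /\ forall n, hnorm (hsub (psum f n) s) <= 2 * c * (/2) ^ n.
Proof.
  intros Hf Hb.
  assert (Htail : forall n j, hnorm (hsub (psum f (n + j)) (psum f n))
                              <= 2 * c * (/2) ^ n - 2 * c * (/2) ^ (n + j)).
  { intros n j. induction j as [|j IH].
    - rewrite Nat.add_0_r, hsub_self, hnorm_zero. lra.
    - rewrite Nat.add_succ_r. simpl psum.
      replace (hsub (hadd (psum f (n + j)) (f (n + j)%nat)) (psum f n))
        with (hadd (hsub (psum f (n + j)) (psum f n)) (f (n + j)%nat)) by vector_eq.
      pose proof (hnorm_triangle (hsub (psum f (n + j)) (psum f n)) (f (n + j)%nat)).
      pose proof (Hb (n + j)%nat). simpl pow. lra. }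
  assert (Hc : 0 <= c) by (pose proof (Hb 0%nat); pose proof (hnorm_ge0 (f 0%nat)); simpl in *; lra).
  destruct (geometric_cauchy_conv (psum f) (2 * c) (/2)) as [s [Hs1 Hs2]]; [lra| |].
  { intros n k Hnk. replace k with (n + (k - n))%nat by lia.
    pose proof (Htail n (k - n)%nat). pose proof (pow_le (/2) (n + (k - n)) ltac:(lra)).
    nra. }
  exists s. split; auto. apply (cs_closed S HS (psum f) s); auto. intro n. apply psum_in, Hf.
Qed.
End Series.

Section SumDecomposition.
Context {X : HilbertSpace}.
Implicit Types x y z w : X.
Variables A B : X -> Prop.
Hypothesis HA : closed_subspace A.
Hypothesis HB : closed_subspace B.

Definition adherent_bounded_sum (M : R) w : Prop :=
  forall eps, 0 < eps -> exists a b, A a /\ B b /\ hnorm a <= M /\ hnorm b <= M /\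
    hnorm (hsub w (hadd a b)) < eps.

Lemma adherent_bounded_sum_zero M : 0 <= M -> adherent_bounded_sum M hzero.
Proof.
  intros HM eps He. exists hzero, hzero.
  rewrite (@hnorm_zero X). repeat split; subspace.
  replace (hsub hzero (hadd (@hzero X) hzero)) with (@hzero X) by vector_eq.
  rewrite hnorm_zero. exact He.
Qed.

Lemma adherent_bounded_sum_sub M M' x y : adherent_bounded_sum M x ->
  adherent_bounded_sum M' y -> adherent_bounded_sum (M + M') (hsub x y).
Proof.
  intros Hx Hy eps He.
  destruct (Hx (eps / 2) ltac:(lra)) as [a1 [b1 [Ha1 [Hb1 [Na1 [Nb1 E1]]]]]].
  destruct (Hy (eps / 2) ltac:(lra)) as [a2 [b2 [Ha2 [Hb2 [Na2 [Nb2 E2]]]]]].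
  exists (hsub a1 a2), (hsub b1 b2). repeat split; subspace.
  - pose proof (hnorm_sub_le a1 a2). lra.
  - pose proof (hnorm_sub_le b1 b2). lra.
  - replace (hsub (hsub x y) (hadd (hsub a1 a2) (hsub b1 b2)))
      with (hsub (hsub x (hadd a1 b1)) (hsub y (hadd a2 b2))) by vector_eq.
    pose proof (hnorm_sub_le (hsub x (hadd a1 b1)) (hsub y (hadd a2 b2))). lra.
Qed.

Lemma adherent_bounded_sum_scal t M w : 0 < t ->
  adherent_bounded_sum M w -> adherent_bounded_sum (t * M) (hscal t w).
Proof.
  intros Ht Hw eps He.
  destruct (Hw (eps / t) ltac:(apply Rdiv_lt_0_compat; lra))
    as [a [b [Ha [Hb [Na [Nb E]]]]]].
  exists (hscal t a), (hscal t b).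
  rewrite !hnorm_scal, Rabs_right by lra.
  repeat split; subspace; try (apply Rmult_le_compat_l; lra).
  replace (hsub (hscal t w) (hadd (hscal t a) (hscal t b)))
    with (hscal t (hsub w (hadd a b))) by vector_eq.
  rewrite hnorm_scal, Rabs_right by lra.
  apply Rmult_lt_compat_l with (r := t) in E; auto.
  replace (t * (eps / t)) with eps in E by (field; lra). exact E.
Qed.

Lemma adherent_bounded_sum_open_compl M w : ~ adherent_bounded_sum M w ->
  exists r, 0 < r /\ forall y, hnorm (hsub y w) <= r -> ~ adherent_bounded_sum M y.
Proof.
  intro Hw. unfold adherent_bounded_sum in Hw.
  apply not_all_ex_not in Hw. destruct Hw as [eps Hw].
  apply imply_to_and in Hw. destruct Hw as [He Hw].
  exists (eps / 2). split; [lra|].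
  intros y Hy Hay. destruct (Hay (eps / 2) ltac:(lra)) as [a [b [Ha [Hb [Na [Nb E]]]]]].
  apply Hw. exists a, b. repeat split; auto.
  pose proof (hnorm_sub_triangle w y (hadd a b)). rewrite hnorm_sub_sym in Hy. lra.
Qed.

Hypothesis HW : is_closed (set_sum A B).

Lemma set_sum_subspace : closed_subspace (set_sum A B).
Proof.
  split; [|split; [|split]]; auto.
  - exists hzero, hzero. repeat split; subspace. vector_eq.
  - intros x y [a1 [b1 [H1 [H2 ->]]]] [a2 [b2 [H3 [H4 ->]]]].
    exists (hadd a1 a2), (hadd b1 b2). repeat split; subspace. vector_eq.
  - intros c x [a1 [b1 [H1 [H2 ->]]]].
    exists (hscal c a1), (hscal c b1). repeat split; subspace. vector_eq.
Qed.

(* Baire's theorem applied to the cover of A + B by the closed sets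
   [adherent_bounded_sum n], followed by translation and scaling. *)
Lemma adherent_bounded_sum_linear : exists C, 0 <= C /\
  forall w, set_sum A B w -> adherent_bounded_sum (C * hnorm w) w.
Proof.
  pose proof set_sum_subspace as HWs.
  destruct (baire_category (set_sum A B) (fun n => adherent_bounded_sum (INR n)))
    as [n [w0 [r [Hw0 [Hr Hball]]]]]; auto.
  { exists hzero. apply cs_zero, HWs. }
  { intros n w. apply adherent_bounded_sum_open_compl. }
  { intros w [a [b [Ha [Hb ->]]]].
    destruct (INR_unbounded (Rmax (hnorm a) (hnorm b))) as [n Hn].
    exists n. intros eps He. exists a, b.
    pose proof (Rmax_l (hnorm a) (hnorm b)). pose proof (Rmax_r (hnorm a) (hnorm b)).
    repeat split; auto; try lra. rewrite hsub_self, hnorm_zero. exact He. }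
  pose proof (pos_INR n).
  assert (Hsmall : forall w, set_sum A B w -> hnorm w < r ->
                   adherent_bounded_sum (INR n + INR n) w).
  { intros w Hw Hwr.
    replace w with (hsub (hadd w0 w) w0) by vector_eq.
    apply adherent_bounded_sum_sub; apply Hball; subspace.
    - replace (hsub (hadd w0 w) w0) with w by vector_eq. exact Hwr.
    - rewrite hsub_self, hnorm_zero. exact Hr. }
  exists (4 * INR n / r). split; [apply Rmult_le_pos; [lra | left; apply Rinv_0_lt_compat; lra]|].
  intros w Hw. destruct (Req_dec (hnorm w) 0) as [H0|H0].
  { apply hnorm_eq0 in H0. subst w. rewrite hnorm_zero, Rmult_0_r.
    apply adherent_bounded_sum_zero. lra. }
  pose proof (hnorm_ge0 w). set (t := r / (2 * hnorm w)).
  assert (Ht : 0 < t) by (apply Rdiv_lt_0_compat; lra).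
  replace w with (hscal (/ t) (hscal t w)) by vector_eq.
  replace (4 * INR n / r * hnorm (hscal (/ t) (hscal t w))) with (/ t * (INR n + INR n)).
  2: { replace (hscal (/ t) (hscal t w)) with w by vector_eq. unfold t. field. lra. }
  apply adherent_bounded_sum_scal; [apply Rinv_0_lt_compat; lra|].
  apply Hsmall; [apply cs_scal; auto|].
  rewrite hnorm_scal, Rabs_right by lra. unfold t. field_simplify; lra.
Qed.
End SumDecomposition.

Section ExactDecomposition.
Context {X : HilbertSpace}.
Implicit Types x y z w : X.
Variables A B : X -> Prop.
Hypothesis HA : closed_subspace A.
Hypothesis HB : closed_subspace B.
Hypothesis HW : is_closed (set_sum A B).
Variable C : R.
Hypothesis HC : 0 <= C.
Hypothesis Happrox : forall w, set_sum A B w -> adherent_bounded_sum A B (C * hnorm w) w.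

(* Repeatedly approximate the current residual to within half its bound. *)
Lemma residual_sequence w e : set_sum A B w -> 0 < e -> hnorm w <= e ->
  exists f g r : nat -> X,
    (forall k, A (f k) /\ B (g k) /\
       hnorm (f k) <= C * e * (/2) ^ k /\ hnorm (g k) <= C * e * (/2) ^ k) /\
    (forall n, hnorm (r n) <= e * (/2) ^ n /\ w = hadd (hadd (psum f n) (psum g n)) (r n)).
Proof.
  intros Hw He Hwe.
  pose proof (set_sum_subspace A B HA HB HW) as HWs.
  assert (Hstep : forall k v, exists p : X * X, set_sum A B v ->
    A (fst p) /\ B (snd p) /\ hnorm (fst p) <= C * hnorm v /\ hnorm (snd p) <= C * hnorm v /\
    hnorm (hsub v (hadd (fst p) (snd p))) < e * (/2) ^ S k).
  { intros k v. destruct (classic (set_sum A B v)) as [Hv|Hv]; [|exists (v, v); tauto].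
    destruct (Happrox v Hv (e * (/2) ^ S k)) as [a [b Hab]].
    { apply Rmult_lt_0_compat; auto. apply pow_lt. lra. }
    exists (a, b). intros _. exact Hab. }
  assert (Hpick : forall k, exists pick : X -> X * X, forall v, set_sum A B v ->
    A (fst (pick v)) /\ B (snd (pick v)) /\
    hnorm (fst (pick v)) <= C * hnorm v /\ hnorm (snd (pick v)) <= C * hnorm v /\
    hnorm (hsub v (hadd (fst (pick v)) (snd (pick v)))) < e * (/2) ^ S k)
    by (intro k; apply (choice _ (Hstep k))).
  destruct (choice _ Hpick) as [pick Hpick'].
  pose (r := fix r k := match k with
             | O => w
             | S k => hsub (r k) (hadd (fst (pick k (r k))) (snd (pick k (r k))))
             end).
  assert (Hr : forall k, set_sum A B (r k) /\ hnorm (r k) <= e * (/2) ^ k).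
  { induction k as [|k [Hk Nk]]; simpl; [split; auto; lra|].
    destruct (Hpick' k (r k) Hk) as [Ha [Hb [_ [_ E]]]].
    assert (set_sum A B (fst (pick k (r k)))) by (exists (fst (pick k (r k))), hzero;
      repeat split; subspace; vector_eq).
    assert (set_sum A B (snd (pick k (r k)))) by (exists hzero, (snd (pick k (r k)));
      repeat split; subspace; vector_eq).
    split; [subspace | simpl in E; lra]. }
  exists (fun k => fst (pick k (r k))), (fun k => snd (pick k (r k))), r. split.
  - intro k. destruct (Hr k) as [Hk Nk].
    destruct (Hpick' k (r k) Hk) as [Ha [Hb [Na [Nb _]]]].
    pose proof (Rmult_le_compat_l C _ _ HC Nk). repeat split; auto; lra.
  - intro n. split; [apply Hr|].
    induction n as [|n IH]; simpl; [vector_eq|].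
    rewrite IH at 1. vector_eq.
Qed.

Lemma exact_decomposition w : set_sum A B w ->
  exists a b, A a /\ B b /\ w = hadd a b /\
    hnorm a <= 2 * C * hnorm w /\ hnorm b <= 2 * C * hnorm w.
Proof.
  intro Hw. destruct (Req_dec (hnorm w) 0) as [H0|H0].
  { apply hnorm_eq0 in H0. subst w. exists hzero, hzero.
    rewrite (@hnorm_zero X), Rmult_0_r. repeat split; subspace; try lra. vector_eq. }
  pose proof (hnorm_ge0 w). set (h := hnorm w) in *. assert (Hh : 0 < h) by lra.
  destruct (residual_sequence w h Hw Hh (Rle_refl _)) as [f [g [r [Hfg Hr]]]].
  destruct (geometric_series_conv A HA f (C * h)) as [a [Ha Hfa]]; [apply Hfg | apply Hfg|].
  destruct (geometric_series_conv B HB g (C * h)) as [b [Hb Hgb]]; [apply Hfg | apply Hfg|].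
  exists a, b. repeat split; auto.
  - apply hsub_eq0, hnorm_le0.
    apply (Rle_of_geometric _ 0 (4 * C * h + h) (/2)); [lra|]. intro n.
    destruct (Hr n) as [Nr Ew].
    replace (hsub w (hadd a b))
      with (hadd (hadd (hsub (psum f n) a) (hsub (psum g n) b)) (r n))
      by (rewrite Ew at 1; vector_eq).
    pose proof (hnorm_triangle (hadd (hsub (psum f n) a) (hsub (psum g n) b)) (r n)).
    pose proof (hnorm_triangle (hsub (psum f n) a) (hsub (psum g n) b)).
    pose proof (Hfa n). pose proof (Hgb n). lra.
  - specialize (Hfa 0%nat). simpl in Hfa. rewrite hnorm_sub_sym, hnorm_sub_zero in Hfa. lra.
  - specialize (Hgb 0%nat). simpl in Hgb. rewrite hnorm_sub_sym, hnorm_sub_zero in Hgb. lra.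
Qed.
End ExactDecomposition.

Lemma set_sum_bounded_decomposition {X : HilbertSpace} (A B : X -> Prop) :
  closed_subspace A -> closed_subspace B -> is_closed (set_sum A B) ->
  exists K, 0 <= K /\ forall w, set_sum A B w ->
    exists a b, A a /\ B b /\ w = hadd a b /\ hnorm a <= K * hnorm w /\ hnorm b <= K * hnorm w.
Proof.
  intros HA HB HW.
  destruct (adherent_bounded_sum_linear A B HA HB HW) as [C [HC Happrox]].
  exists (2 * C). split; [lra|].
  apply exact_decomposition; auto.
Qed.

(* [Top m U i] unfolds to [dr_op (U i) (U (cyc m (S i)))]. *)
Definition dr_op {X : HilbertSpace} (A B : X -> Prop) (x : X) : X :=
  hsub (hadd (proj B (refl A x)) x) (proj A x).

Section DouglasRachford.
Context {X : HilbertSpace}.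
Implicit Types x y z w : X.
Variables A B : X -> Prop.
Hypothesis HA : closed_subspace A.
Hypothesis HB : closed_subspace B.

Lemma dr_op_sub x y : dr_op A B (hsub x y) = hsub (dr_op A B x) (dr_op A B y).
Proof.
  unfold dr_op, refl. rewrite (proj_sub A) by auto.
  replace (hsub (hscal 2 (hsub (proj A x) (proj A y))) (hsub x y))
    with (hsub (hsub (hscal 2 (proj A x)) x) (hsub (hscal 2 (proj A y)) y)) by vector_eq.
  rewrite (proj_sub B) by auto. vector_eq.
Qed.

Lemma dr_op_zero : dr_op A B hzero = hzero.
Proof.
  transitivity (dr_op A B (hsub hzero hzero)); [f_equal; vector_eq|].
  rewrite dr_op_sub. apply hsub_self.
Qed.

Lemma dr_op_decomp y : dr_op A B y =
  hadd (hsub (proj B (proj A y)) (proj B (hsub y (proj A y)))) (hsub y (proj A y)).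
Proof.
  unfold dr_op, refl.
  replace (hsub (hscal 2 (proj A y)) y) with (hsub (proj A y) (hsub y (proj A y))) by vector_eq.
  rewrite proj_sub by auto. vector_eq.
Qed.

Lemma dr_op_residual y : hsub y (dr_op A B y) =
  hadd (hsub (proj A y) (proj B (proj A y))) (proj B (hsub y (proj A y))).
Proof. rewrite dr_op_decomp. vector_eq. Qed.

(* T y, P_A y - P_B P_A y and P_B (y - P_A y) are pairwise orthogonal. *)
Lemma dr_op_norm_split y :
  inner y y = inner (dr_op A B y) (dr_op A B y) + inner (hsub y (dr_op A B y)) (hsub y (dr_op A B y)).
Proof.
  rewrite dr_op_residual, dr_op_decomp.
  set (a := proj A y). set (b1 := proj B a). set (b2 := proj B (hsub y a)).
  assert (h1 : inner (hsub y a) a = 0) by (apply proj_orth; subspace).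
  assert (h2 : inner (hsub a b1) b1 = 0) by (apply proj_orth; subspace).
  assert (h3 : inner (hsub a b1) b2 = 0) by (apply proj_orth; subspace).
  assert (h4 : inner (hsub (hsub y a) b2) b1 = 0) by (apply proj_orth; subspace).
  assert (h5 : inner (hsub (hsub y a) b2) b2 = 0) by (apply proj_orth; subspace).
  revert h1 h2 h3 h4 h5. inner_expand. intros.
  pose proof (inner_sym y a). pose proof (inner_sym y b1). pose proof (inner_sym y b2).
  pose proof (inner_sym a b1). pose proof (inner_sym a b2). pose proof (inner_sym b1 b2).
  lra.
Qed.

Lemma dr_op_nonexp y : hnorm (dr_op A B y) <= hnorm y.
Proof.
  apply hnorm_le_sq. rewrite (dr_op_norm_split y).
  pose proof (inner_pos (hsub y (dr_op A B y))). lra.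
Qed.

Lemma dr_op_fixed c c' : A c -> B c -> (forall s, set_sum A B s -> inner c' s = 0) ->
  dr_op A B (hadd c c') = hadd c c'.
Proof.
  intros Ac Bc Hc'.
  assert (PA : proj A (hadd c c') = c).
  { apply proj_unique; auto. intros s Hs.
    replace (hsub (hadd c c') c) with c' by vector_eq.
    apply Hc'. exists s, hzero. repeat split; subspace. vector_eq. }
  assert (PB : proj B (refl A (hadd c c')) = c).
  { unfold refl. rewrite PA. apply proj_unique; auto. intros s Hs.
    replace (hsub (hsub (hscal 2 c) (hadd c c')) c) with (hscal (-1) c') by vector_eq.
    rewrite inner_scal_l, Hc'; [ring|]. exists hzero, s. repeat split; subspace. vector_eq. }
  unfold dr_op. rewrite PA, PB. vector_eq.
Qed.

Section BoundedDecomposition.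
Variable K : R.
Hypothesis HK : 0 <= K.
Hypothesis Hdecomp : forall w, set_sum A B w ->
  exists a b, A a /\ B b /\ w = hadd a b /\ hnorm a <= K * hnorm w /\ hnorm b <= K * hnorm w.
Hypothesis HW : is_closed (set_sum A B).

Lemma proj_sum_le_proj v : (forall s, A s -> inner v s = 0) ->
  hnorm (proj (set_sum A B) v) <= K * hnorm (proj B v).
Proof.
  intro Hv. pose proof (set_sum_subspace A B HA HB HW) as HWs.
  set (q := proj (set_sum A B) v).
  assert (Wq : set_sum A B q) by subspace.
  destruct (Hdecomp q Wq) as [a [b [Ha [Hb [Eq [_ Nb]]]]]].
  assert (Hqq : inner q q = inner (proj B v) b).
  { assert (o1 : inner (hsub v q) q = 0) by (apply proj_orth; subspace).
    assert (o2 : inner (hsub v (proj B v)) b = 0) by (apply proj_orth; subspace).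
    assert (o3 : inner v q = inner v a + inner v b) by (rewrite Eq; inner_expand; ring).
    rewrite (Hv a Ha) in o3. revert o1 o2. inner_expand. lra. }
  pose proof (cauchy_schwarz (proj B v) b). rewrite <- Hqq, <- hnorm_sq in H.
  pose proof (hnorm_ge0 q). pose proof (hnorm_ge0 (proj B v)).
  assert (hnorm q * hnorm q <= hnorm q * (K * hnorm (proj B v))) by nra.
  destruct (Req_dec (hnorm q) 0) as [H3|H3]; [rewrite H3; nra|].
  apply Rmult_le_reg_l with (r := hnorm q); lra.
Qed.

(* With y = P_A y + a', write P_A y - P_B P_A y = a1 + b' boundedly; then
   c = P_A y - a1 lies in A and B, c' = a' - P_(A+B) a' is orthogonal to A + B,
   and c + c' is a fixed point with y - (c + c') = a1 + P_(A+B) a'. *)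
Lemma dr_op_dist_fix y : exists z, dr_op A B z = z /\
  inner (hsub y z) (hsub y z) <= 2 * (K * K) * inner (hsub y (dr_op A B y)) (hsub y (dr_op A B y)).
Proof.
  pose proof (set_sum_subspace A B HA HB HW) as HWs.
  set (a := proj A y). set (a' := hsub y a). set (b1 := proj B a). set (b2 := proj B a').
  set (q := proj (set_sum A B) a').
  assert (Nres : inner (hsub y (dr_op A B y)) (hsub y (dr_op A B y))
                 = inner (hsub a b1) (hsub a b1) + inner b2 b2).
  { rewrite dr_op_residual. fold a a' b1 b2.
    assert (h : inner (hsub a b1) b2 = 0) by (apply proj_orth; subspace).
    revert h. generalize (hsub a b1). intros u h. inner_expand.
    rewrite (inner_sym b2 u). lra. }
  destruct (Hdecomp (hsub a b1)) as [a1 [b' [Ha1 [Hb' [E1 [Na1 _]]]]]].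
  { exists a, (hscal (-1) b1). repeat split; subspace. vector_eq. }
  assert (Hc : B (hsub a a1)).
  { replace (hsub a a1) with (hadd b1 b'); [subspace|].
    transitivity (hadd b1 (hsub (hsub a b1) a1)); [|vector_eq].
    rewrite E1. vector_eq. }
  assert (Hq : hnorm q <= K * hnorm b2).
  { apply proj_sum_le_proj. intros s Hs. apply proj_orth; auto. }
  exists (hadd (hsub a a1) (hsub a' q)). split.
  - apply dr_op_fixed; [subspace | exact Hc|].
    intros s Hs. apply proj_orth; auto.
  - replace (hsub y (hadd (hsub a a1) (hsub a' q))) with (hadd a1 q) by (unfold a'; vector_eq).
    pose proof (inner_sum_le a1 q).
    assert (inner a1 a1 <= K * K * inner (hsub a b1) (hsub a b1)).
    { rewrite <- !hnorm_sq. pose proof (hnorm_ge0 a1). nra. }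
    assert (inner q q <= K * K * inner b2 b2).
    { rewrite <- !hnorm_sq. pose proof (hnorm_ge0 q). nra. }
    rewrite Nres. nra.
Qed.
End BoundedDecomposition.
End DouglasRachford.

Section FejerMonotone.
Context {X : HilbertSpace}.

(* By Fejer monotonicity the tail of the sequence stays within twice the current
   distance to Z of a nearly closest point of Z. *)
Lemma fejer_linear_conv (Z : X -> Prop) (u : nat -> X) c q :
  is_closed Z -> (exists z, Z z) -> 0 <= q < 1 ->
  (forall z n, Z z -> hnorm (hsub (u (S n)) z) <= hnorm (hsub (u n) z)) ->
  (forall n, setdist Z (u n) <= c * q ^ n) ->
  exists l, Z l /\ lin_conv u l.
Proof.
  intros HZ Hne Hq Hfej Hd.
  assert (Hc : 0 <= c) by (pose proof (Hd 0%nat); pose proof (setdist_ge0 Z (u 0%nat) Hne);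
                           simpl in *; lra).
  set (q' := (1 + q) / 2). assert (Hq' : 0 < q' /\ q <= q' /\ q' < 1) by (unfold q'; lra).
  assert (Hnear : forall n, exists z, Z z /\ hnorm (hsub (u n) z) <= (c + 1) * q' ^ n).
  { intro n. destruct (setdist_approx Z (u n) (q' ^ n) Hne) as [z [Hz Hzn]].
    { apply pow_lt. lra. }
    exists z. split; auto. pose proof (Hd n).
    assert (c * q ^ n <= c * q' ^ n) by (apply Rmult_le_compat_l, pow_incr; lra).
    lra. }
  destruct (choice _ Hnear) as [zs Hzs].
  assert (Hfej' : forall z n j, Z z -> hnorm (hsub (u (n + j)%nat) z) <= hnorm (hsub (u n) z)).
  { intros z n j Hz. induction j as [|j IH]; [rewrite Nat.add_0_r; lra|].
    rewrite Nat.add_succ_r. pose proof (Hfej z (n + j)%nat Hz). lra. }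
  destruct (geometric_cauchy_conv u (2 * (c + 1)) q') as [l [_ Hl]]; [lra| |].
  { intros n k Hnk. replace k with (n + (k - n))%nat by lia. destruct (Hzs n) as [Zn Nn].
    pose proof (Hfej' (zs n) n (k - n)%nat Zn).
    pose proof (hnorm_sub_triangle (u (n + (k - n))%nat) (zs n) (u n)).
    rewrite (hnorm_sub_sym (zs n)) in H0. lra. }
  exists l. split.
  - apply (HZ zs l); [intro n; apply Hzs|].
    apply (hconv_of_geometric _ _ (3 * (c + 1)) q'); [lra|]. intro n.
    destruct (Hzs n) as [_ Nn]. pose proof (Hl n).
    pose proof (hnorm_sub_triangle (zs n) (u n) l). rewrite (hnorm_sub_sym (zs n) (u n)) in H0. lra.
  - exists (2 * (c + 1)), q'. repeat split; auto; lra.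
Qed.
End FejerMonotone.

Lemma uniform_bound_fin (m : nat) (P : nat -> R -> Prop) :
  (forall i K K', P i K -> K <= K' -> P i K') ->
  (forall i, (1 <= i <= m)%nat -> exists K, 0 <= K /\ P i K) ->
  exists K, 0 <= K /\ forall i, (1 <= i <= m)%nat -> P i K.
Proof.
  intros Hmono. induction m as [|m IH]; intro H.
  - exists 0. split; [lra|]. intros; lia.
  - destruct IH as [K1 [HK1 P1]]; [intros i Hi; apply H; lia|].
    destruct (H (S m) ltac:(lia)) as [K2 [HK2 P2]].
    exists (Rmax K1 K2). split; [pose proof (Rmax_l K1 K2); lra|].
    intros i Hi. destruct (Nat.eq_dec i (S m)) as [->|Hne].
    + apply Hmono with K2; auto. apply Rmax_r.
    + apply Hmono with K1; [apply P1; lia | apply Rmax_l].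
Qed.

Lemma maxdist_le {X : HilbertSpace} (C : nat -> X -> Prop) x k M : 0 <= M ->
  (forall i, (1 <= i <= k)%nat -> setdist (C i) x <= M) -> maxdist C x k <= M.
Proof.
  intros HM. induction k as [|k IH]; intro H; simpl; [lra|].
  apply Rmax_lub; [apply IH; intros; apply H; lia | apply H; lia].
Qed.

Section CyclicDouglasRachford.
Context {X : HilbertSpace}.
Implicit Types x y z w : X.
Variable m : nat.
Variable U : nat -> X -> Prop.
Hypothesis hU : forall i, (1 <= i <= m)%nat -> closed_subspace (U i).
Hypothesis hsum : forall i, (1 <= i <= m)%nat -> is_closed (set_sum (U i) (U (cyc m (S i)))).

Lemma cyc_range i : (1 <= i <= m)%nat -> (1 <= cyc m (S i) <= m)%nat.
Proof. intro H. unfold cyc. destruct (Nat.eqb_spec (S i) (S m)); lia. Qed.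

Lemma closed_subspace_next i : (1 <= i <= m)%nat -> closed_subspace (U (cyc m (S i))).
Proof. intro H. apply hU, cyc_range, H. Qed.

Lemma Top_sub i x y : (1 <= i <= m)%nat ->
  Top m U i (hsub x y) = hsub (Top m U i x) (Top m U i y).
Proof. intro H. apply dr_op_sub; auto using closed_subspace_next. Qed.

Lemma Top_norm_split i y : (1 <= i <= m)%nat ->
  inner y y = inner (Top m U i y) (Top m U i y)
              + inner (hsub y (Top m U i y)) (hsub y (Top m U i y)).
Proof. intro H. apply dr_op_norm_split; auto using closed_subspace_next. Qed.

Lemma Top_nonexp i x y : (1 <= i <= m)%nat ->
  hnorm (hsub (Top m U i x) (Top m U i y)) <= hnorm (hsub x y).
Proof.
  intro H. rewrite <- Top_sub by exact H.
  apply dr_op_nonexp; auto using closed_subspace_next.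
Qed.

Lemma Zset_closed i : (1 <= i <= m)%nat -> is_closed (Zset m U i).
Proof.
  intros Hi u l Hu Hl. apply hsub_eq0, hnorm_le0, Rle_plus_epsilon. intros eps He.
  destruct (Hl (eps / 2) ltac:(lra)) as [N HN]. specialize (HN N (le_n _)).
  pose proof (Top_nonexp i l (u N) Hi). rewrite (Hu N) in H.
  pose proof (hnorm_sub_triangle (Top m U i l) (u N) l).
  rewrite (hnorm_sub_sym l (u N)) in H. lra.
Qed.

Let Z := inter_fam m (Zset m U).

Lemma Z_closed : is_closed Z.
Proof. intros u l Hu Hl i Hi. apply (Zset_closed i Hi u l); auto. intro n. apply Hu, Hi. Qed.

Lemma Z_zero : Z hzero.
Proof. intros i Hi. apply dr_op_zero; auto using closed_subspace_next. Qed.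

Fixpoint defect x k : R :=
  match k with
  | O => 0
  | S k => defect x k + inner (hsub (Tcomp m U k x) (Tcomp m U (S k) x))
                              (hsub (Tcomp m U k x) (Tcomp m U (S k) x))
  end.

Lemma defect_S x k : defect x (S k) = defect x k
  + inner (hsub (Tcomp m U k x) (Tcomp m U (S k) x)) (hsub (Tcomp m U k x) (Tcomp m U (S k) x)).
Proof. reflexivity. Qed.

Lemma defect_ge0 x k : 0 <= defect x k.
Proof.
  induction k as [|k IH]; [simpl; lra|]. rewrite defect_S.
  pose proof (inner_pos (hsub (Tcomp m U k x) (Tcomp m U (S k) x))). lra.
Qed.

Lemma step_sq_le_defect x j : (j < m)%nat ->
  inner (hsub (Tcomp m U j x) (Tcomp m U (S j) x)) (hsub (Tcomp m U j x) (Tcomp m U (S j) x))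
    <= defect x m.
Proof.
  intro Hj.
  assert (Hmono : forall k, (S j <= k)%nat -> defect x (S j) <= defect x k).
  { intros k Hk. induction Hk as [|k Hk IH]; [lra|]. rewrite (defect_S x k).
    pose proof (inner_pos (hsub (Tcomp m U k x) (Tcomp m U (S k) x))). lra. }
  pose proof (Hmono m Hj). rewrite defect_S in H. pose proof (defect_ge0 x j). lra.
Qed.

Lemma step_le_defect x j : (j < m)%nat ->
  hnorm (hsub (Tcomp m U j x) (Tcomp m U (S j) x)) <= sqrt (defect x m).
Proof. intro Hj. apply sqrt_le_1_alt, step_sq_le_defect, Hj. Qed.

Lemma Tcomp_dist_from_start x k : (k <= m)%nat ->
  hnorm (hsub x (Tcomp m U k x)) <= INR k * sqrt (defect x m).
Proof.
  induction k as [|k IH]; intro Hk.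
  - simpl. rewrite hsub_self, (@hnorm_zero X). lra.
  - rewrite S_INR. pose proof (hnorm_sub_triangle x (Tcomp m U k x) (Tcomp m U (S k) x)).
    pose proof (step_le_defect x k Hk). specialize (IH ltac:(lia)). lra.
Qed.

(* Each T_i is linear and firmly nonexpansive, so moving towards any z in Z
   decreases the squared distance by the squared step length. *)
Lemma Tcomp_dist_identity x z : Z z -> forall k, (k <= m)%nat ->
  inner (hsub x z) (hsub x z)
    = inner (hsub (Tcomp m U k x) z) (hsub (Tcomp m U k x) z) + defect x k.
Proof.
  intros Hz k. induction k as [|k IH]; intro Hk; [simpl; lra|].
  rewrite IH by lia. rewrite defect_S.
  assert (Hi : (1 <= S k <= m)%nat) by lia.
  assert (E : hsub (Tcomp m U (S k) x) z = Top m U (S k) (hsub (Tcomp m U k x) z)).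
  { rewrite Top_sub, (Hz (S k) Hi) by exact Hi. reflexivity. }
  rewrite (Top_norm_split (S k) (hsub (Tcomp m U k x) z) Hi), <- E.
  replace (hsub (hsub (Tcomp m U k x) z) (hsub (Tcomp m U (S k) x) z))
    with (hsub (Tcomp m U k x) (Tcomp m U (S k) x)) by vector_eq.
  ring.
Qed.

Lemma Tcomp_fejer x z : Z z -> hnorm (hsub (Tcomp m U m x) z) <= hnorm (hsub x z).
Proof.
  intro Hz. apply hnorm_le_sq. rewrite (Tcomp_dist_identity x z Hz m (le_n _)).
  pose proof (defect_ge0 x m). lra.
Qed.

Lemma Top_dist_fix_uniform : exists K, 0 <= K /\ forall i, (1 <= i <= m)%nat ->
  forall y, exists z, Top m U i z = z /\
    inner (hsub y z) (hsub y z) <= K * inner (hsub y (Top m U i y)) (hsub y (Top m U i y)).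
Proof.
  apply uniform_bound_fin.
  - intros i K K' H HK y. destruct (H y) as [z [Hz Hb]]. exists z. split; auto.
    pose proof (inner_pos (hsub y (Top m U i y))). nra.
  - intros i Hi. pose proof (closed_subspace_next i Hi) as Hi'.
    destruct (set_sum_bounded_decomposition _ _ (hU i Hi) Hi' (hsum i Hi)) as [K [HK Hdec]].
    exists (2 * (K * K)). split; [nra|].
    apply dr_op_dist_fix; auto.
Qed.

Lemma setdist_Zset_le_defect : exists K, 0 <= K /\ forall x i, (1 <= i <= m)%nat ->
  setdist (Zset m U i) x <= K * sqrt (defect x m).
Proof.
  destruct Top_dist_fix_uniform as [K [HK HKfix]].
  exists (INR m + sqrt K). split; [pose proof (pos_INR m); pose proof (sqrt_pos K); lra|].
  intros x [|j] Hi; [lia|].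
  destruct (HKfix (S j) Hi (Tcomp m U j x)) as [w [Hw Hwb]].
  eapply Rle_trans; [apply (setdist_le _ _ w), Hw|].
  pose proof (hnorm_sub_triangle x (Tcomp m U j x) w).
  pose proof (Tcomp_dist_from_start x j ltac:(lia)).
  assert (hnorm (hsub (Tcomp m U j x) w) <= sqrt K * sqrt (defect x m)).
  { rewrite <- sqrt_mult_alt by exact HK. apply sqrt_le_1_alt.
    change (Top m U (S j) (Tcomp m U j x)) with (Tcomp m U (S j) x) in Hwb.
    pose proof (step_sq_le_defect x j ltac:(lia)). nra. }
  assert (INR j <= INR m) by (apply le_INR; lia).
  pose proof (sqrt_pos (defect x m)). nra.
Qed.

Lemma setdist_Z_Tcomp x :
  setdist Z (Tcomp m U m x) * setdist Z (Tcomp m U m x) + defect x m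
    <= setdist Z x * setdist Z x.
Proof.
  assert (Hne : exists c, Z c) by (exists hzero; exact Z_zero).
  cut (setdist Z (Tcomp m U m x) * setdist Z (Tcomp m U m x)
         <= setdist Z x * setdist Z x - defect x m); [lra|].
  cut (setdist Z (Tcomp m U m x) * setdist Z (Tcomp m U m x) + defect x m
         <= setdist Z x * setdist Z x); [lra|].
  apply setdist_sq_ge; auto. intros z Hz.
  rewrite (Tcomp_dist_identity x z Hz m (le_n _)), <- hnorm_sq.
  pose proof (setdist_le Z (Tcomp m U m x) z Hz). pose proof (setdist_ge0 Z (Tcomp m U m x) Hne).
  nra.
Qed.

Hypothesis hreg : bdd_lin_regular m (Zset m U).

Lemma setdist_Z_le_defect rho : 0 < rho -> exists C, 1 <= C /\
  forall x, hnorm x <= rho -> setdist Z x <= C * sqrt (defect x m).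
Proof.
  intro Hrho. destruct setdist_Zset_le_defect as [K [HK HKd]].
  destruct hreg as [_ Hr]. destruct (Hr rho Hrho) as [mu [Hmu Hmup]].
  exists (mu * K + 1). split; [nra|]. intros x Hx.
  pose proof (sqrt_pos (defect x m)).
  assert (maxdist (Zset m U) x m <= K * sqrt (defect x m))
    by (apply maxdist_le; [nra | intros; apply HKd; auto]).
  pose proof (Hmup x Hx). unfold Z. nra.
Qed.

Lemma setdist_Z_contraction rho : 0 < rho -> exists r, 0 <= r < 1 /\
  forall x, hnorm x <= rho ->
    setdist Z (Tcomp m U m x) * setdist Z (Tcomp m U m x) <= r * (setdist Z x * setdist Z x).
Proof.
  intro Hrho. destruct (setdist_Z_le_defect rho Hrho) as [C [HC HCd]].
  exists (1 - / (C * C)).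
  assert (Hinv : 0 < / (C * C) <= 1).
  { split; [apply Rinv_0_lt_compat; nra|]. rewrite <- Rinv_1. apply Rinv_le_contravar; nra. }
  split; [lra|]. intros x Hx.
  pose proof (setdist_Z_Tcomp x). specialize (HCd x Hx).
  set (d := setdist Z x) in *. set (D := defect x m) in *.
  assert (HD : 0 <= D) by apply defect_ge0.
  assert (Hd0 : 0 <= d) by (apply setdist_ge0; exists hzero; exact Z_zero).
  assert (HdD : d * d * / (C * C) <= D).
  { apply Rmult_le_reg_r with (r := C * C); [nra|].
    replace (d * d * / (C * C) * (C * C)) with (d * d) by (field; lra).
    pose proof (sqrt_sqrt D HD). pose proof (sqrt_pos D). nra. }
  nra.
Qed.

Lemma setdist_Z_iter_geometric x0 : exists c q, 0 <= q < 1 /\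
  forall n, setdist Z (Nat.iter n (Tcomp m U m) x0) <= c * q ^ n.
Proof.
  set (u := fun n => Nat.iter n (Tcomp m U m) x0).
  assert (Hbd : forall n, hnorm (u n) <= hnorm x0).
  { induction n as [|n IH]; simpl; [lra|].
    pose proof (Tcomp_fejer (u n) hzero Z_zero). rewrite !hnorm_sub_zero in H. lra. }
  destruct (setdist_Z_contraction (hnorm x0 + 1)) as [r [Hr Hc]].
  { pose proof (hnorm_ge0 x0). lra. }
  set (d := fun n => setdist Z (u n)).
  assert (Hd0 : forall n, 0 <= d n) by (intro; apply setdist_ge0; exists hzero; exact Z_zero).
  assert (Hdsq : forall n, d n * d n <= r ^ n * (d 0%nat * d 0%nat)).
  { induction n as [|n IH]; [simpl; lra|].
    assert (d (S n) * d (S n) <= r * (d n * d n)) by (apply (Hc (u n)); pose proof (Hbd n); lra).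
    change (r ^ S n) with (r * r ^ n). nra. }
  exists (d 0%nat), (sqrt r). split.
  { split; [apply sqrt_pos|]. rewrite <- sqrt_1. apply sqrt_lt_1_alt. lra. }
  intro n. apply Rle_of_sq_le; [apply Rmult_le_pos; [apply Hd0 | apply pow_le, sqrt_pos]|].
  replace (d 0%nat * sqrt r ^ n * (d 0%nat * sqrt r ^ n))
    with ((sqrt r * sqrt r) ^ n * (d 0%nat * d 0%nat)) by (rewrite Rpow_mult_distr; ring).
  rewrite sqrt_sqrt by lra. apply Hdsq.
Qed.
End CyclicDouglasRachford.

Theorem corollary8p3 (X : HilbertSpace) (m : nat) (U : nat -> X -> Prop)
  (hm : (1 <= m)%nat)
  (hU : forall i, (1 <= i <= m)%nat -> closed_subspace (U i))
  (hsum : forall i, (1 <= i <= m)%nat -> is_closed (set_sum (U i) (U (cyc m (S i)))))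
  (hreg : bdd_lin_regular m (Zset m U)) :
  forall x0 : X, exists xbar : X,
    inter_fam m (Zset m U) xbar /\
    lin_conv (fun n => Nat.iter n (Tcomp m U m) x0) xbar.
Proof.
  intro x0.
  destruct (setdist_Z_iter_geometric m U hU hsum hreg x0) as [c [q [Hq Hd]]].
  apply (fejer_linear_conv _ _ c q); auto.
  - apply Z_closed; auto.
  - exists hzero. apply Z_zero; auto.
  - intros z n Hz. apply Tcomp_fejer; auto.
Qed.
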